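(* Let $p\in(0,1]$, $c\ge0$, $\beta<1$, $\delta\in(0,1)$ with $c<\frac12p+\frac12(\beta-1)p^2$, and let $R=\frac12$, $T=p+(1-p)\frac12-c$, $S=(1-p)\frac12$, $Q=p^2\frac12\beta+p(1-p)+(1-p)^2\frac12-c$. For an integer $k\ge1$ let \[V_k=T+\sum_{i=1}^{k-1}\delta^iQ+\delta^kS+\frac{\delta^{k+1}}{1-\delta}R\] be Player 1's payoff when Player 1 defects in rounds $1,\dots,k$ and cooperates afterwards, while Player 2 cooperates in round 1, defects in rounds $2,\dots,k+1$ and cooperates afterwards. Then: (i) if $\delta\ge\frac{Q-S}{R-S}=p\beta+(1-p)-\frac{2c}{p}$, then $V_1\ge V_k$ for all $k\ge1$ (defecting for only one round is optimal among these plans); (ii) if $\delta<\frac{Q-S}{R-S}=p\beta+(1-p)-\frac{2c}{p}$, then $V_{k+1}>V_k$ for every $k\ge1$, so it is optimal for Player 1 to defect indefinitely ($k\to\infty$).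
   Context: Model: two content providers in an infinitely repeated game choose each period to cooperate ($C$) or attack/defect ($D$). $p$: attack success probability; $c$: cost per attack; $\beta<1$: market degradation factor; $\delta$: discount factor. Stage payoffs: mutual cooperation $R$ each; a lone attacker $T$, the cooperator facing an attack $S$; mutual attack $Q$ each. The setting models Tit-for-Tat retaliation against $k$ consecutive defections. The condition on $c$ is the standing Prisoners' Dilemma assumption $T>R>Q>S$. *)

From HB Require Import structures.
From mathcomp Require Import all_boot all_order all_algebra.
Set Implicit Arguments. Unset Strict Implicit. Unset Printing Implicit Defensive.
Import Order.TTheory GRing.Theory Num.Theory.
Local Open Scope ring_scope.

Definition payR (R : realFieldType) : R := 1 / 2.
Definition payT (R : realFieldType) (p c : R) : R := p + (1 - p) * (1 / 2) - c.
Definition payS (R : realFieldType) (p : R) : R := (1 - p) * (1 / 2).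
Definition payQ (R : realFieldType) (p c beta : R) : R :=
  p ^+ 2 * (1 / 2) * beta + p * (1 - p) + (1 - p) ^+ 2 * (1 / 2) - c.

Definition Vk (R : realFieldType) (p c beta delta : R) (k : nat) : R :=
  payT p c + \sum_(1 <= i < k) delta ^+ i * payQ p c beta
  + delta ^+ k * payS p + delta ^+ k.+1 / (1 - delta) * payR R.

From HB Require Import structures.
From mathcomp Require Import all_boot all_order all_algebra.
From mathcomp Require Import ring.
Import Order.TTheory GRing.Theory Num.Theory.
Local Open Scope ring_scope.

(* Passing from k to k+1 replaces the round-(k+1) payoff [delta^k R] by
   [delta^k Q + delta^(k+1) S], so [V_(k+1) - V_k = delta^k ((Q - S) - delta (R - S))]:
   the sign of this increment does not depend on k, and it is nonpositive exactly
   when [delta >= (Q - S)/(R - S)].  Hence the plans either all lose against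
   k = 1, or each one is beaten by the next. *)

Section Payoffs.

Variables (R : realFieldType) (p c beta delta : R).

Let Q := payQ p c beta.
Let S := payS p.

Lemma payR_sub_payS : payR R - S = p / 2.
Proof. by rewrite /payR /S /payS; field. Qed.

Lemma threshold_payoffs : p != 0 ->
  (Q - S) / (payR R - S) = p * beta + (1 - p) - 2 * c / p.
Proof. by move=> p_neq0; rewrite payR_sub_payS /Q /S /payQ /payS; field. Qed.

Lemma Vk_succ_sub (k : nat) : delta != 1 -> (1 <= k)%N ->
  Vk p c beta delta k.+1 - Vk p c beta delta k =
  delta ^+ k * ((Q - S) - delta * (payR R - S)).
Proof.
move=> delta_neq1 k_gt0; rewrite /Vk big_nat_recr //=.
have one_sub_delta_neq0 : 1 - delta != 0 by rewrite subr_eq0 eq_sym.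
by rewrite /Q /S !exprS; field.
Qed.

Hypotheses (delta_gt0 : 0 < delta) (delta_lt1 : delta < 1).

Let delta_neq1 : delta != 1. Proof. by rewrite lt_eqF. Qed.

Lemma Vk_succ_le (k : nat) : Q - S <= delta * (payR R - S) -> (1 <= k)%N ->
  Vk p c beta delta k.+1 <= Vk p c beta delta k.
Proof.
move=> hQS k_gt0; rewrite -subr_le0 Vk_succ_sub //.
by rewrite mulr_ge0_le0 ?exprn_ge0 ?(ltW delta_gt0) // subr_le0.
Qed.

Lemma Vk_le_V1 (k : nat) : Q - S <= delta * (payR R - S) -> (1 <= k)%N ->
  Vk p c beta delta k <= Vk p c beta delta 1.
Proof.
move=> hQS; elim: k => [//|[|k] IH _ //].
exact: le_trans (Vk_succ_le k.+1 hQS isT) (IH isT).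
Qed.

Lemma Vk_lt_succ (k : nat) : delta * (payR R - S) < Q - S -> (1 <= k)%N ->
  Vk p c beta delta k < Vk p c beta delta k.+1.
Proof.
move=> hQS k_gt0; rewrite -subr_gt0 Vk_succ_sub //.
by rewrite mulr_gt0 ?exprn_gt0 // subr_gt0.
Qed.

End Payoffs.

Theorem theorem5 (R : realFieldType) (p c beta delta : R)
  (hp0 : 0 < p) (hp1 : p <= 1) (hc : 0 <= c) (hbeta : beta < 1)
  (hd0 : 0 < delta) (hd1 : delta < 1)
  (hPD : c < 1 / 2 * p + 1 / 2 * (beta - 1) * p ^+ 2) :
  (payQ p c beta - payS p) / (payR R - payS p) = p * beta + (1 - p) - 2 * c / p
  /\ ((payQ p c beta - payS p) / (payR R - payS p) <= delta ->
        forall k : nat, (1 <= k)%N -> Vk p c beta delta k <= Vk p c beta delta 1)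
  /\ (delta < (payQ p c beta - payS p) / (payR R - payS p) ->
        forall k : nat, (1 <= k)%N -> Vk p c beta delta k < Vk p c beta delta k.+1).
Proof.
have RS_gt0 : 0 < payR R - payS p by rewrite payR_sub_payS divr_gt0.
split; first exact/threshold_payoffs/lt0r_neq0.
split.
- by rewrite ler_pdivrMr // => hQS k; apply: Vk_le_V1.
- by rewrite ltr_pdivlMr // => hQS k; apply: Vk_lt_succ.
Qed.
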